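(* Assume the Lipschitz gradient assumption, $r_1>L_x$, $r_2>L_y$, and let $\{(x^t,y^t,z^t,v^t)\}$ be generated by DS-GDA with $c,\alpha>0$, $\beta,\mu\in(0,1)$. Then for every $t\ge0$, $$d(y^{t+1},z^{t+1},v^{t+1})\ge d(y^t,z^t,v^t)+\frac{(2-\mu)r_2}{2\mu}\|v^{t+1}-v^t\|^2+\frac{r_1}{2}\langle z^{t+1}+z^t-2x(y^{t+1},z^{t+1},v^t),z^{t+1}-z^t\rangle+\langle\nabla_yF(x(y^t,z^t,v^t),y^t,z^t,v^t),y^{t+1}-y^t\rangle-\frac{L_d}{2}\|y^{t+1}-y^t\|^2,$$ where $L_d=L_y\sigma_1+L_y+r_2$, $\sigma_1=\frac{L_y+r_1-L_x}{r_1-L_x}$.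
   Context: Let $\mathcal X\subset\mathbb R^n$, $\mathcal Y\subset\mathbb R^d$ be nonempty convex compact sets and $f:\mathbb R^n\times\mathbb R^d\to\mathbb R$ continuously differentiable. Lipschitz gradient assumption: there are $L_x,L_y>0$ such that for all $x,x'\in\mathcal X$, $y,y'\in\mathcal Y$, $\|\nabla_x f(x,y)-\nabla_x f(x',y')\|\le L_x(\|x-x'\|+\|y-y'\|)$ and $\|\nabla_y f(x,y)-\nabla_y f(x',y')\|\le L_y(\|x-x'\|+\|y-y'\|)$. $F(x,y,z,v)=f(x,y)+\frac{r_1}{2}\|x-z\|^2-\frac{r_2}{2}\|y-v\|^2$; $d(y,z,v)=\min_{x\in\mathcal X}F(x,y,z,v)$ with unique minimizer $x(y,z,v)$. DS-GDA: given $x^0,y^0,z^0,v^0$, for $t\ge0$: $x^{t+1}=\mathrm{proj}_{\mathcal X}(x^t-c\nabla_xF(x^t,y^t,z^t,v^t))$; $y^{t+1}=\mathrm{proj}_{\mathcal Y}(y^t+\alpha\nabla_yF(x^{t+1},y^t,z^t,v^t))$; $z^{t+1}=z^t+\beta(x^{t+1}-z^t)$; $v^{t+1}=v^t+\mu(y^{t+1}-v^t)$. *)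

From HB Require Import structures.
From mathcomp Require Import all_boot all_order all_algebra.
From mathcomp Require Import all_classical all_reals all_analysis.
Set Implicit Arguments. Unset Strict Implicit. Unset Printing Implicit Defensive.
Import Order.TTheory GRing.Theory Num.Theory.
Import numFieldNormedType.Exports.
Local Open Scope classical_set_scope.
Local Open Scope ring_scope.

Section Defs.
Variable R : realType.

Definition dotp (n : nat) (u w : 'rV[R]_n) : R := \sum_(i < n) u ord0 i * w ord0 i.
Definition enorm (n : nat) (u : 'rV[R]_n) : R := Num.sqrt (dotp u u).

Definition is_proj (n : nat) (S : set 'rV[R]_n) (w p : 'rV[R]_n) : Prop :=
  S p /\ forall u, S u -> enorm (p - w) <= enorm (u - w).

Definition C1_with_grads (n d : nat) (f : 'rV[R]_n -> 'rV[R]_d -> R)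
  (gx : 'rV[R]_n -> 'rV[R]_d -> 'rV[R]_n) (gy : 'rV[R]_n -> 'rV[R]_d -> 'rV[R]_d) : Prop :=
  (forall p : 'rV[R]_n * 'rV[R]_d,
     differentiable (fun q : 'rV[R]_n * 'rV[R]_d => f q.1 q.2) p /\
     forall h : 'rV[R]_n * 'rV[R]_d,
       'd (fun q : 'rV[R]_n * 'rV[R]_d => f q.1 q.2) p h
         = dotp (gx p.1 p.2) h.1 + dotp (gy p.1 p.2) h.2) /\
  continuous (fun q : 'rV[R]_n * 'rV[R]_d => gx q.1 q.2) /\
  continuous (fun q : 'rV[R]_n * 'rV[R]_d => gy q.1 q.2).

Definition Ffun (n d : nat) (f : 'rV[R]_n -> 'rV[R]_d -> R) (r1 r2 : R)
  (x : 'rV[R]_n) (y : 'rV[R]_d) (z : 'rV[R]_n) (v : 'rV[R]_d) : R :=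
  f x y + r1 / 2 * enorm (x - z) ^+ 2 - r2 / 2 * enorm (y - v) ^+ 2.

Definition gradxF (n d : nat) (gx : 'rV[R]_n -> 'rV[R]_d -> 'rV[R]_n) (r1 : R)
  (x : 'rV[R]_n) (y : 'rV[R]_d) (z : 'rV[R]_n) (v : 'rV[R]_d) : 'rV[R]_n :=
  gx x y + r1 *: (x - z).
Definition gradyF (n d : nat) (gy : 'rV[R]_n -> 'rV[R]_d -> 'rV[R]_d) (r2 : R)
  (x : 'rV[R]_n) (y : 'rV[R]_d) (z : 'rV[R]_n) (v : 'rV[R]_d) : 'rV[R]_d :=
  gy x y - r2 *: (y - v).

End Defs.

From HB Require Import structures.
From mathcomp Require Import all_boot all_order all_algebra.
From mathcomp Require Import all_classical all_reals all_analysis.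
From mathcomp Require Import ring lra.
Import Order.TTheory GRing.Theory Num.Theory.
Import numFieldNormedType.Exports.
Local Open Scope classical_set_scope.
Local Open Scope ring_scope.

(* Compare d(y,z,v) = min_x F(x,y,z,v) before and after one step by moving one
   variable at a time: v -> v', then z -> z', then y -> y'.  For the moves in v
   and z, d is bounded below by evaluating F at the new minimizer in the old
   configuration, which leaves exact quadratic expressions.  For the move in y,
   the descent lemma for f in y yields the gradient term, while the displacement
   of the minimizer x(y,z,v) -> x(y',z,v) enters only through a cross term
   Ly |x' - x| |y' - y|; by Young's inequality it is paid for by the quadratic
   growth of F(., y, z, v) around its minimizer, whose modulus is r1 - Lx > 0. *)

Section InnerProduct.
Context {R : realType} {n : nat}.
Implicit Types u w z : 'rV[R]_n.

Lemma dotpC u w : dotp u w = dotp w u.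
Proof. by apply: eq_bigr => i _; rewrite mulrC. Qed.

Lemma dotpDl u w z : dotp (u + w) z = dotp u z + dotp w z.
Proof. by rewrite /dotp -big_split; apply: eq_bigr => i _; rewrite mxE mulrDl. Qed.

Lemma dotpDr u w z : dotp z (u + w) = dotp z u + dotp z w.
Proof. by rewrite dotpC dotpDl !(dotpC z). Qed.

Lemma dotpZl a u w : dotp (a *: u) w = a * dotp u w.
Proof. by rewrite /dotp mulr_sumr; apply: eq_bigr => i _; rewrite mxE mulrA. Qed.

Lemma dotpZr a u w : dotp w (a *: u) = a * dotp w u.
Proof. by rewrite dotpC dotpZl dotpC. Qed.

Lemma dotpNl u w : dotp (- u) w = - dotp u w.
Proof. by rewrite -scaleN1r dotpZl mulN1r. Qed.

Lemma dotpBl u w z : dotp (u - w) z = dotp u z - dotp w z.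
Proof. by rewrite dotpDl dotpNl. Qed.

Lemma dotpBr u w z : dotp z (u - w) = dotp z u - dotp z w.
Proof. by rewrite dotpC dotpBl !(dotpC z). Qed.

Lemma dotp0r u : dotp u 0 = 0.
Proof. by rewrite -(scale0r (0 : 'rV[R]_n)) dotpZr mul0r. Qed.

Lemma dotpp_ge0 u : 0 <= dotp u u.
Proof. by apply: sumr_ge0 => i _; rewrite -expr2 sqr_ge0. Qed.

Lemma enorm_ge0 u : 0 <= enorm u.
Proof. exact: sqrtr_ge0. Qed.

Lemma sqr_enorm u : enorm u ^+ 2 = dotp u u.
Proof. by rewrite /enorm sqr_sqrtr // dotpp_ge0. Qed.

Lemma enormZ a u : enorm (a *: u) = `|a| * enorm u.
Proof.
by rewrite /enorm dotpZl dotpZr mulrA sqrtrM ?sqrtr_sqr // -expr2 sqr_ge0.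
Qed.

Lemma sqr_enormZ a u : enorm (a *: u) ^+ 2 = a ^+ 2 * enorm u ^+ 2.
Proof. by rewrite enormZ exprMn real_normK ?num_real. Qed.

Lemma enorm0 : enorm (0 : 'rV[R]_n) = 0.
Proof. by rewrite /enorm dotp0r sqrtr0. Qed.

Lemma sqr_enormD u w : enorm (u + w) ^+ 2 = enorm u ^+ 2 + 2 * dotp u w + enorm w ^+ 2.
Proof. by rewrite !sqr_enorm dotpDl !dotpDr (dotpC w u); ring. Qed.

Lemma sqr_enormB_sub u z z' :
  enorm (u - z') ^+ 2 - enorm (u - z) ^+ 2 = dotp (z' + z - 2%:R *: u) (z' - z).
Proof.
rewrite !sqr_enorm !dotpBl !dotpBr !dotpDl !dotpZl.
by rewrite (dotpC z' u) (dotpC z u) (dotpC z' z); ring.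
Qed.

Lemma sqr_enorm_relax (mu : R) u w : mu != 0 ->
  enorm (u - w) ^+ 2 - enorm (u - (w + mu *: (u - w))) ^+ 2
    = (2 - mu) / mu * enorm (w + mu *: (u - w) - w) ^+ 2.
Proof.
move=> mu_neq0.
have -> : u - (w + mu *: (u - w)) = (1 - mu) *: (u - w).
  by rewrite scalerBl scale1r opprD addrA.
have -> : w + mu *: (u - w) - w = mu *: (u - w) by rewrite addrAC subrr add0r.
by rewrite !sqr_enormZ; field.
Qed.

(* The quadratic [a |-> |u - a w|^2] is nonnegative, so its discriminant is not positive. *)
Lemma sqr_dotp_le u w : dotp u w ^+ 2 <= dotp u u * dotp w w.
Proof.
set U := dotp u u; set W := dotp w w; set P := dotp u w.
have quad_ge0 a : 0 <= U - 2 * a * P + a ^+ 2 * W.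
  have := dotpp_ge0 (u - a *: w).
  by rewrite dotpBl !dotpBr !dotpZl !dotpZr (dotpC w u) -/U -/W -/P; lra.
have U_ge0 : 0 <= U := dotpp_ge0 u.
have [W0|W_neq0] := eqVneq W 0.
  have [P0|P_neq0] := eqVneq P 0; first by rewrite P0 W0 expr2 !mulr0.
  have := quad_ge0 ((U + 1) / (2 * P)); rewrite W0 mulr0 addr0.
  have -> : 2 * ((U + 1) / (2 * P)) * P = U + 1 by field; rewrite P_neq0; lra.
  lra.
have W_gt0 : 0 < W by rewrite lt_neqAle eq_sym W_neq0 dotpp_ge0.
have := quad_ge0 (P / W).
have -> : U - 2 * (P / W) * P + (P / W) ^+ 2 * W = U - P ^+ 2 / W.
  by field; rewrite W_neq0.
by rewrite subr_ge0 ler_pdivrMr // mulrC.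
Qed.

Lemma cauchy_schwarz u w : `|dotp u w| <= enorm u * enorm w.
Proof.
rewrite /enorm -sqrtrM ?dotpp_ge0 // -(sqrtr_sqr (dotp u w)).
by rewrite ler_sqrt ?sqr_dotp_le // mulr_ge0 ?dotpp_ge0.
Qed.

End InnerProduct.

Section Taylor.
Variable R : realType.

Lemma taylor1_remainder_le (phi D : R -> R) (K : R) :
  (forall s, derivable phi s 1 /\ 'D_1 phi s = D s) ->
  (forall s, 0 <= s <= 1 -> D s - D 0 <= K * s) ->
  phi 1 - phi 0 - D 0 <= K / 2.
Proof.
move=> dphi D_ub.
(* [psi s = phi s - D 0 * s - K / 2 * s ^+ 2] is nonincreasing on [0, 1]. *)
pose psi : R -> R := (phi \- (D 0 \*: id)) \- ((K / 2) \*: (id * id)).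
have dpsi s : is_derive s (1 : R) psi (D s - D 0 *: 1 - (K / 2) *: (s *: 1 + s *: 1)).
  have [dphis <-] := dphi s; have : is_derive s (1 : R) phi ('D_1 phi s).
    exact: derivableP.
  by move=> ?; apply: is_deriveB; apply: is_deriveZ.
suff : psi 1 <= psi 0.
  rewrite /psi /= /GRing.scale /= !mulr1 !mulr0 mulrfctE /= mulr1 mulr0; lra.
apply: (@ler0_derive1_le_cc R psi 0 1).
- by move=> x _; exact: (@ex_derive _ _ _ _ _ _ _ (dpsi x)).
- move=> x; rewrite in_itv /= => /andP[x0 x1].
  rewrite derive1E derive_val.
  have := D_ub x; rewrite (ltW x0) (ltW x1) => /(_ isT).
  by rewrite /GRing.scale /= !mulr1; lra.
- apply: derivable_within_continuous => x _.
  exact: (@ex_derive _ _ _ _ _ _ _ (dpsi x)).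
all: by rewrite ?in_itv /= ?lexx ?ler01.
Qed.

Lemma taylor1_remainder_abs_le (phi D : R -> R) (K : R) :
  (forall s, derivable phi s 1 /\ 'D_1 phi s = D s) ->
  (forall s, 0 <= s <= 1 -> `|D s - D 0| <= K * s) ->
  `|phi 1 - phi 0 - D 0| <= K / 2.
Proof.
move=> dphi D_lip; rewrite ler_norml; apply/andP; split.
  suff : - phi 1 - - phi 0 - - D 0 <= K / 2 by lra.
  apply: (@taylor1_remainder_le (fun s => - phi s) (fun s => - D s)) => [s|s /D_lip].
    have [dphis Dphis] := dphi s.
    by split; [exact: derivableN | rewrite deriveN // Dphis].
  by rewrite ler_norml => /andP[? _]; lra.
by apply: taylor1_remainder_le => // s /D_lip; rewrite ler_norml => /andP[_ ?]; lra.
Qed.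

Lemma derive_along_line {V : normedModType R} (F : V -> R) (p h : V) (s : R) :
  differentiable F (p + s *: h) ->
  derivable (fun s : R => F (p + s *: h)) s 1 /\
  'D_1 (fun s : R => F (p + s *: h)) s = 'd F (p + s *: h) h.
Proof.
move=> dF.
have quotientE : (fun t : R => t^-1 *: (((fun s => F (p + s *: h)) \o shift s) (t *: 1)
      - F (p + s *: h)))
    = (fun t : R => t^-1 *: ((F \o shift (p + s *: h)) (t *: h) - F (p + s *: h))).
  apply/funext => t /=; congr (_ *: (F _ - _)).
  by rewrite [t%:A]mulr1 scalerDl addrCA addrA.
split; first by have := @diff_derivable _ _ _ _ _ h dF; rewrite /derivable -quotientE.
by have := @deriveE _ _ _ _ _ h dF; rewrite /derive -quotientE.
Qed.

Lemma segment_taylor1 (V : normedModType R) (F G : V -> R) (p h : V) (K : R) :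
  (forall q, differentiable F q /\ 'd F q h = G q) ->
  (forall s, 0 <= s <= 1 -> `|G (p + s *: h) - G p| <= K * s) ->
  `|F (p + h) - F p - G p| <= K / 2.
Proof.
move=> dF G_lip.
have dF_along s : derivable (fun s : R => F (p + s *: h)) s 1 /\
    'D_1 (fun s : R => F (p + s *: h)) s = G (p + s *: h).
  by have [? <-] := dF (p + s *: h); exact: derive_along_line.
have := taylor1_remainder_abs_le _ _ K dF_along.
by rewrite scale1r scale0r addr0; apply => s /G_lip; rewrite ?scale0r ?addr0.
Qed.

End Taylor.

Lemma convex_set_segment (R : realType) (n : nat) (X : set 'rV[R]_n) (a b : 'rV[R]_n) (s : R) :
  convex_set X -> X a -> X b -> 0 <= s <= 1 -> X (a + s *: (b - a)).
Proof.
move=> cX Xa Xb /andP[s0 s1].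
have := cX b a (Itv01 s0 s1) (mem_set Xb) (mem_set Xa); rewrite inE; congr X.
rewrite /conv /= /unstable.onem scalerBl scale1r scalerBr.
by rewrite addrC -!addrA (addrC (s *: b)).
Qed.

(* If [A] were negative, [l A + l^2 B] would be negative for small [l > 0]. *)
Lemma linear_coef_ge0 (R : realFieldType) (A B : R) :
  (forall l, 0 < l <= 1 -> 0 <= l * A + l ^+ 2 * B) -> 0 <= A.
Proof.
move=> quad_ge0; rewrite leNgt; apply/negP => A_lt0.
pose l := - A / (2 * `|B| - A).
have den_gt0 : 0 < 2 * `|B| - A by have := normr_ge0 B; lra.
have l_gt0 : 0 < l by rewrite divr_gt0 //; lra.
have l_le1 : l <= 1 by rewrite ler_pdivrMr // mul1r; have := normr_ge0 B; lra.
have := quad_ge0 l; rewrite l_gt0 l_le1 => /(_ isT).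
have -> : l * A + l ^+ 2 * B = l * (A + l * B) by ring.
rewrite pmulr_rge0 // => lin_ge0.
have : 0 <= A + l * `|B| by have := ler_wpM2l (ltW l_gt0) (ler_norm B); lra.
have -> : A + l * `|B| = A * (`|B| - A) / (2 * `|B| - A) by rewrite /l; field; lra.
rewrite pmulr_lge0 ?invr_gt0 //; have := normr_ge0 B; nra.
Qed.

Lemma young_sqr (R : realFieldType) (k m a b : R) :
  0 < k -> m * a * b <= k / 2 * a ^+ 2 + m ^+ 2 / (2 * k) * b ^+ 2.
Proof.
move=> k_gt0.
have -> : k / 2 * a ^+ 2 + m ^+ 2 / (2 * k) * b ^+ 2
    = m * a * b + (k * a - m * b) ^+ 2 / (2 * k) by field; lra.
by rewrite lerDl divr_ge0 ?sqr_ge0 //; lra.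
Qed.

Section SmoothMinimax.
Context {R : realType} {n d : nat}.
Context {X : set 'rV[R]_n} {Y : set 'rV[R]_d}.
Context {f : 'rV[R]_n -> 'rV[R]_d -> R}.
Context {gx : 'rV[R]_n -> 'rV[R]_d -> 'rV[R]_n} {gy : 'rV[R]_n -> 'rV[R]_d -> 'rV[R]_d}.
Context {Lx Ly r1 r2 : R}.
Context {xstar : 'rV[R]_d -> 'rV[R]_n -> 'rV[R]_d -> 'rV[R]_n}.
Hypothesis X_convex : convex_set X.
Hypothesis Y_convex : convex_set Y.
Hypothesis f_C1 : C1_with_grads f gx gy.
Hypothesis gx_lipschitz : forall x x' y y', X x -> X x' -> Y y -> Y y' ->
  enorm (gx x y - gx x' y') <= Lx * (enorm (x - x') + enorm (y - y')).
Hypothesis gy_lipschitz : forall x x' y y', X x -> X x' -> Y y -> Y y' ->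
  enorm (gy x y - gy x' y') <= Ly * (enorm (x - x') + enorm (y - y')).

Lemma C1_taylor1 x y a b (K : R) :
  (forall s, 0 <= s <= 1 ->
     `|dotp (gx (x + s *: a) (y + s *: b)) a + dotp (gy (x + s *: a) (y + s *: b)) b
       - (dotp (gx x y) a + dotp (gy x y) b)| <= K * s) ->
  `|f (x + a) (y + b) - f x y - (dotp (gx x y) a + dotp (gy x y) b)| <= K / 2.
Proof.
move=> grad_lip; have [f_diff _] := f_C1.
have along s : (x, y) + s *: (a, b) = (x + s *: a, y + s *: b).
  by apply: injective_projections.
have := @segment_taylor1 _ _ (fun q => f q.1 q.2)
  (fun q => dotp (gx q.1 q.2) a + dotp (gy q.1 q.2) b) (x, y) (a, b) K.
apply=> [q|s]; first by split; [exact: (f_diff q).1 | exact: (f_diff q).2].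
by rewrite along; exact: grad_lip.
Qed.

Lemma descent_x x u y : X x -> X u -> Y y ->
  `|f u y - f x y - dotp (gx x y) (u - x)| <= Lx / 2 * enorm (u - x) ^+ 2.
Proof.
move=> Xx Xu Yy.
have := @C1_taylor1 x y (u - x) 0 (Lx * enorm (u - x) ^+ 2).
rewrite subrKC dotp0r !addr0 => taylor; rewrite mulrAC; apply: taylor => s s01.
rewrite scaler0 addr0 dotp0r !addr0 -dotpBl.
apply: le_trans (cauchy_schwarz _ _) _.
have Xs : X (x + s *: (u - x)) by exact: convex_set_segment.
apply: le_trans (ler_wpM2r (enorm_ge0 _) (gx_lipschitz _ _ _ _ Xs Xx Yy Yy)) _.
rewrite subrr enorm0 addr0 addrC addKr enormZ ger0_norm; last by case/andP: s01.
by rewrite [leLHS](_ : _ = Lx * enorm (u - x) ^+ 2 * s) //; ring.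
Qed.

Lemma descent_y x y w : X x -> Y y -> Y w ->
  `|f x w - f x y - dotp (gy x y) (w - y)| <= Ly / 2 * enorm (w - y) ^+ 2.
Proof.
move=> Xx Yy Yw.
have := @C1_taylor1 x y 0 (w - y) (Ly * enorm (w - y) ^+ 2).
rewrite subrKC dotp0r addr0 add0r => taylor; rewrite mulrAC; apply: taylor => s s01.
rewrite scaler0 addr0 dotp0r !add0r -dotpBl.
apply: le_trans (cauchy_schwarz _ _) _.
have Ys : Y (y + s *: (w - y)) by exact: convex_set_segment.
apply: le_trans (ler_wpM2r (enorm_ge0 _) (gy_lipschitz _ _ _ _ Xx Xx Ys Yy)) _.
rewrite subrr enorm0 add0r addrC addKr enormZ ger0_norm; last by case/andP: s01.
by rewrite [leLHS](_ : _ = Ly * enorm (w - y) ^+ 2 * s) //; ring.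
Qed.

Lemma minimizer_first_order xs y z v u : X xs -> Y y -> X u ->
  (forall x, X x -> Ffun f r1 r2 xs y z v <= Ffun f r1 r2 x y z v) ->
  0 <= dotp (gradxF gx r1 xs y z v) (u - xs).
Proof.
move=> Xxs Yy Xu xs_min; set h := u - xs.
rewrite /gradxF dotpDl dotpZl.
apply: (@linear_coef_ge0 _ _ ((Lx + r1) / 2 * enorm h ^+ 2)) => l /andP[l_gt0 l_le1].
have Xl : X (xs + l *: h) by apply: convex_set_segment; rewrite ?(ltW l_gt0).
have := xs_min _ Xl; have := descent_x _ _ _ Xxs Xl Yy; rewrite /Ffun.
have -> : xs + l *: h - xs = l *: h by rewrite addrAC subrr add0r.
have -> : xs + l *: h - z = (xs - z) + l *: h by rewrite addrAC.
rewrite (sqr_enormD (xs - z)) !dotpZr sqr_enormZ ler_norml => /andP[_].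
nra.
Qed.

Lemma minimizer_quadratic_growth xs y z v u : X xs -> Y y -> X u ->
  (forall x, X x -> Ffun f r1 r2 xs y z v <= Ffun f r1 r2 x y z v) ->
  (r1 - Lx) / 2 * enorm (u - xs) ^+ 2 <= Ffun f r1 r2 u y z v - Ffun f r1 r2 xs y z v.
Proof.
move=> Xxs Yy Xu xs_min.
have := minimizer_first_order _ _ _ _ _ Xxs Yy Xu xs_min.
have := descent_x _ _ _ Xxs Xu Yy; rewrite ler_norml => /andP[f_lb _].
rewrite /Ffun /gradxF dotpDl dotpZl.
have -> : u - z = (xs - z) + (u - xs) by rewrite addrAC addrCA subrr addr0.
rewrite (sqr_enormD (xs - z)); lra.
Qed.

Hypothesis xstar_min : forall y z v, X (xstar y z v) /\
  forall x, X x -> Ffun f r1 r2 (xstar y z v) y z v <= Ffun f r1 r2 x y z v.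

Local Notation dual y z v := (Ffun f r1 r2 (xstar y z v) y z v).

Lemma dual_shift_v y z v v' :
  r2 / 2 * (enorm (y - v) ^+ 2 - enorm (y - v') ^+ 2) <= dual y z v' - dual y z v.
Proof.
have [Xx' _] := xstar_min y z v'; have [_ x_min] := xstar_min y z v.
by have := x_min _ Xx'; rewrite /Ffun; lra.
Qed.

Lemma dual_shift_z y z z' v :
  r1 / 2 * dotp (z' + z - 2%:R *: xstar y z' v) (z' - z) <= dual y z' v - dual y z v.
Proof.
have [Xx' _] := xstar_min y z' v; have [_ x_min] := xstar_min y z v.
by have := x_min _ Xx'; rewrite /Ffun -sqr_enormB_sub; lra.
Qed.

Lemma dual_ascent_y y y' z v : Lx < r1 -> Y y -> Y y' ->
  dotp (gradyF gy r2 (xstar y z v) y z v) (y' - y)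
    - (Ly ^+ 2 / (r1 - Lx) + Ly + r2) / 2 * enorm (y' - y) ^+ 2
  <= dual y' z v - dual y z v.
Proof.
move=> r1_gt_Lx Yy Yy'.
have [Xx x_min] := xstar_min y z v; have [Xx' _] := xstar_min y' z v.
set x := xstar y z v; set x' := xstar y' z v.
have growth := minimizer_quadratic_growth _ _ _ _ _ Xx Yy Xx' x_min.
have := descent_y _ _ _ Xx' Yy Yy'; rewrite ler_norml => /andP[f_y _].
have cross : - (Ly * enorm (x' - x) * enorm (y' - y)) <= dotp (gy x' y - gy x y) (y' - y).
  have := cauchy_schwarz (gy x' y - gy x y) (y' - y); rewrite ler_norml => /andP[+ _].
  apply: le_trans; rewrite lerN2 ler_wpM2r ?enorm_ge0 //.
  by have := gy_lipschitz _ _ _ _ Xx' Xx Yy Yy; rewrite subrr enorm0 addr0.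
have gap_gt0 : 0 < r1 - Lx by rewrite subr_gt0.
have := @young_sqr _ _ Ly (enorm (x' - x)) (enorm (y' - y)) gap_gt0.
move: growth cross; rewrite /Ffun /gradyF !dotpBl dotpZl.
have -> : y' - v = (y - v) + (y' - y) by rewrite [RHS]addrC [RHS]addrA subrK.
rewrite (sqr_enormD (y - v)).
have -> : Ly ^+ 2 / (2 * (r1 - Lx)) = Ly ^+ 2 / (r1 - Lx) / 2 by field; lra.
lra.
Qed.

End SmoothMinimax.

Theorem lemma6 (R : realType) (n d : nat)
  (X : set 'rV[R]_n) (Y : set 'rV[R]_d)
  (f : 'rV[R]_n -> 'rV[R]_d -> R)
  (gx : 'rV[R]_n -> 'rV[R]_d -> 'rV[R]_n) (gy : 'rV[R]_n -> 'rV[R]_d -> 'rV[R]_d)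
  (Lx Ly r1 r2 c alpha beta mu : R)
  (xstar : 'rV[R]_d -> 'rV[R]_n -> 'rV[R]_d -> 'rV[R]_n)
  (xs : nat -> 'rV[R]_n) (ys : nat -> 'rV[R]_d)
  (zs : nat -> 'rV[R]_n) (vs : nat -> 'rV[R]_d) :
  X !=set0 -> convex_set X -> compact X ->
  Y !=set0 -> convex_set Y -> compact Y ->
  C1_with_grads f gx gy ->
  0 < Lx -> 0 < Ly ->
  (forall x x' y y', X x -> X x' -> Y y -> Y y' ->
     enorm (gx x y - gx x' y') <= Lx * (enorm (x - x') + enorm (y - y'))) ->
  (forall x x' y y', X x -> X x' -> Y y -> Y y' ->
     enorm (gy x y - gy x' y') <= Ly * (enorm (x - x') + enorm (y - y'))) ->
  Lx < r1 -> Ly < r2 ->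
  (forall y z v, X (xstar y z v) /\
     forall x, X x -> Ffun f r1 r2 (xstar y z v) y z v <= Ffun f r1 r2 x y z v) ->
  0 < c -> 0 < alpha -> 0 < beta < 1 -> 0 < mu < 1 ->
  X (xs 0%N) -> Y (ys 0%N) ->
  (forall t, is_proj X (xs t - c *: gradxF gx r1 (xs t) (ys t) (zs t) (vs t)) (xs t.+1)) ->
  (forall t, is_proj Y (ys t + alpha *: gradyF gy r2 (xs t.+1) (ys t) (zs t) (vs t)) (ys t.+1)) ->
  (forall t, zs t.+1 = zs t + beta *: (xs t.+1 - zs t)) ->
  (forall t, vs t.+1 = vs t + mu *: (ys t.+1 - vs t)) ->
  let dfun := fun y z v => Ffun f r1 r2 (xstar y z v) y z v in
  let sigma1 := (Ly + r1 - Lx) / (r1 - Lx) in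
  let Ld := Ly * sigma1 + Ly + r2 in
  forall t : nat,
    dfun (ys t.+1) (zs t.+1) (vs t.+1) >=
      dfun (ys t) (zs t) (vs t)
      + (2 - mu) * r2 / (2 * mu) * enorm (vs t.+1 - vs t) ^+ 2
      + r1 / 2 * dotp (zs t.+1 + zs t - 2%:R *: xstar (ys t.+1) (zs t.+1) (vs t)) (zs t.+1 - zs t)
      + dotp (gradyF gy r2 (xstar (ys t) (zs t) (vs t)) (ys t) (zs t) (vs t)) (ys t.+1 - ys t)
      - Ld / 2 * enorm (ys t.+1 - ys t) ^+ 2.
Proof.
move=> _ X_convex _ _ Y_convex _ f_C1 _ Ly_gt0 gx_lip gy_lip r1_gt_Lx _ xstar_min
  _ _ _ /andP[mu_gt0 _] _ Y_y0 _ y_proj _ v_step dfun sigma1 Ld t.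
have Y_yt : Y (ys t) by case: t => [|t] //; have [] := y_proj t.
have Y_yt1 : Y (ys t.+1) by have [] := y_proj t.
have := dual_shift_v xstar_min (ys t.+1) (zs t.+1) (vs t) (vs t.+1).
have := dual_shift_z xstar_min (ys t.+1) (zs t) (zs t.+1) (vs t).
have := dual_ascent_y X_convex Y_convex f_C1 gx_lip gy_lip xstar_min _ _ (zs t) (vs t)
  r1_gt_Lx Y_yt Y_yt1.
have relax : r2 / 2 * (enorm (ys t.+1 - vs t) ^+ 2 - enorm (ys t.+1 - vs t.+1) ^+ 2)
    = (2 - mu) * r2 / (2 * mu) * enorm (vs t.+1 - vs t) ^+ 2.
  by rewrite v_step sqr_enorm_relax ?gt_eqF //; field; rewrite gt_eqF.
have Ld_ge : (Ly ^+ 2 / (r1 - Lx) + Ly + r2) / 2 <= Ld / 2.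
  rewrite ler_pM2r // /Ld /sigma1.
  have -> : Ly * ((Ly + r1 - Lx) / (r1 - Lx)) = Ly ^+ 2 / (r1 - Lx) + Ly.
    by field; rewrite subr_eq0 gt_eqF.
  lra.
have := ler_wpM2r (sqr_ge0 (enorm (ys t.+1 - ys t))) Ld_ge.
rewrite /dfun; lra.
Qed.
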